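(* Any quantum algorithm which takes an $n\times n$ permutation matrix as input (with oracle access to its entries) and outputs the sign of the permutation matrix has query complexity at least $\Omega(n^{3/2})$.
   Context: A permutation matrix is a Boolean $n\times n$ matrix with exactly one entry $1$ in each row and each column; its entries equal to $1$ are at positions $(i,\pi(i))$ for a permutation $\pi$, and its sign is the sign of $\pi$. *)

From HB Require Import structures.
From mathcomp Require Import all_boot all_order all_algebra all_fingroup all_field.
Set Implicit Arguments. Unset Strict Implicit. Unset Printing Implicit Defensive.
Import Order.TTheory GRing.Theory Num.Theory.
Local Open Scope ring_scope.

(* Basis of the Hilbert space: query register (i, j) for entry (i,j) of an
   n x n Boolean matrix, an answer bit, and a workspace register of size m. *)
Definition qbasis (n m : nat) : finType := ('I_n * 'I_n * bool * 'I_m)%type.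

Definition qop (S : finType) := S -> S -> algC.
Definition qvec (S : finType) := S -> algC.

Definition qapply (S : finType) (M : qop S) (v : qvec S) : qvec S :=
  fun s => \sum_(t : S) M s t * v t.

Definition qunitary (S : finType) (M : qop S) : Prop :=
  forall s t : S, \sum_(u : S) (M u s)^* * M u t = (s == t)%:R.

Definition qbasis_vec (S : finType) (s0 : S) : qvec S := fun s => (s == s0)%:R.

Definition oracle_flip n m (x : 'I_n -> 'I_n -> bool) (t : qbasis n m)
  : qbasis n m :=
  let: (i, j, b, w) := t in (i, j, b (+) x i j, w).

Definition qoracle n m (x : 'I_n -> 'I_n -> bool) : qop (qbasis n m) :=
  fun s t => (s == oracle_flip x t)%:R.

Fixpoint qrun n m (U : nat -> qop (qbasis n m)) (s0 : qbasis n m)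
  (x : 'I_n -> 'I_n -> bool) (k : nat) : qvec (qbasis n m) :=
  match k with
  | 0 => qapply (U 0%N) (qbasis_vec s0)
  | k'.+1 => qapply (U k) (qapply (@qoracle n m x) (qrun U s0 x k'))
  end.

Definition qprob n m (U : nat -> qop (qbasis n m)) (s0 : qbasis n m)
  (out : qbasis n m -> bool) (x : 'I_n -> 'I_n -> bool) (T : nat) (b : bool)
  : algC :=
  \sum_(s : qbasis n m | out s == b) `|qrun U s0 x T s| ^+ 2.

Definition perm_matrix n (p : 'S_n) : 'I_n -> 'I_n -> bool :=
  fun i j => p i == j.

(* A T-query algorithm (workspace size m, unitaries U 0..U T, initial basis
   state s0, output labelling out) computes the sign of permutation matrices
   with bounded error 1/3: output bit = odd_perm p (true iff sign is -1). *)
Definition computes_perm_sign n m (T : nat) (U : nat -> qop (qbasis n m))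
  (s0 : qbasis n m) (out : qbasis n m -> bool) : Prop :=
  (forall k, (k <= T)%N -> qunitary (U k)) /\
  forall p : 'S_n, 2%:R / 3%:R <= qprob U s0 out (perm_matrix p) T (odd_perm p).

From HB Require Import structures.
From mathcomp Require Import all_boot all_order all_algebra all_fingroup all_field.
From mathcomp Require Import ring zify.
Import Order.TTheory GRing.Theory Num.Theory.
Set Implicit Arguments. Unset Strict Implicit. Unset Printing Implicit Defensive.
Local Open Scope ring_scope.

(* A weighted adversary argument.  Relate every permutation p to the n(n-1)
   permutations [row_swap a b p], a != b, which have the opposite sign, and
   let [progress k] be the total overlap of the corresponding pairs of states
   after k queries.  It starts at n! n(n-1); if the algorithm is correct with
   probability 2/3, every final overlap is at most 17/18, so [progress] has to
   drop by n! n(n-1)/18.  A query changes an overlap only through the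
   amplitude on the entries where the two inputs differ.  Weighting a 1-entry
   by 1/sqrt n and a 0-entry by sqrt n, AM-GM bounds the drop per query by
   4 sqrt n n!, because an entry equal to 1 is changed by at most 2n row swaps
   and an entry equal to 0 by at most 2.  Hence T >= n(n-1) / (72 sqrt n). *)

Lemma ler_weighted_AGM2 (R : numFieldType) (a b l : R) :
  0 <= a -> 0 <= b -> 0 < l -> 2 * (a * b) <= l * a ^+ 2 + l^-1 * b ^+ 2.
Proof.
move=> a0 b0 l0; rewrite -subr_ge0.
have -> : l * a ^+ 2 + l^-1 * b ^+ 2 - 2 * (a * b) = l^-1 * (l * a - b) ^+ 2.
  by field; rewrite gt_eqF.
apply: mulr_ge0; first by rewrite invr_ge0 ltW.
by rewrite -realEsqr rpredB // ?rpredM // ger0_real // ltW.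
Qed.

Section InnerProduct.
Variable S : finType.
Implicit Types (v w : qvec S) (M : qop S).

Definition qdot v w : algC := \sum_s (v s)^* * w s.
Definition qnorm2 v : algC := \sum_s `|v s| ^+ 2.

Lemma qdot_self v : qdot v v = qnorm2 v.
Proof. by apply: eq_bigr => s _; rewrite normCK mulrC. Qed.

Lemma qnorm2_basis s0 : qnorm2 (qbasis_vec s0) = 1.
Proof.
rewrite /qnorm2 (bigD1 s0) //= /qbasis_vec eqxx normr1 expr1n big1 ?addr0 //.
by move=> s /negbTE ->; rewrite normr0 expr0n.
Qed.

Lemma qdot_unitary M v w : qunitary M ->
  qdot (qapply M v) (qapply M w) = qdot v w.
Proof.
move=> uM; rewrite /qdot /qapply.
transitivity (\sum_u \sum_s \sum_t ((v s)^* * w t) * ((M u s)^* * M u t)).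
  apply: eq_bigr => u _; rewrite rmorph_sum big_distrl; apply: eq_bigr => s _.
  by rewrite big_distrr; apply: eq_bigr => t _; rewrite rmorphM /=; ring.
rewrite exchange_big; apply: eq_bigr => s _.
rewrite exchange_big (bigD1 s) //= -big_distrr /= uM eqxx mulr1 big1 ?addr0 //.
by move=> t ts; rewrite -big_distrr /= uM eq_sym (negbTE ts) mulr0.
Qed.

Lemma norm_qdot_le v w : `|qdot v w| <= \sum_s `|v s| * `|w s|.
Proof.
apply: le_trans (ler_norm_sum _ _ _) _; apply: ler_sum => s _.
by rewrite normrM norm_conjC.
Qed.

(* Weighted AM-GM, with weight 2/3 where [v] concentrates and 3/2 where [w] does. *)
Lemma norm_qdot_separated v w (P : pred S) :
  qnorm2 v = 1 -> qnorm2 w = 1 ->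
  2%:R / 3%:R <= \sum_(s | P s) `|v s| ^+ 2 ->
  2%:R / 3%:R <= \sum_(s | ~~ P s) `|w s| ^+ 2 ->
  `|qdot v w| <= 17%:R / 18%:R.
Proof.
move=> nv nw hv hw; set t : algC := 2%:R / 3%:R.
have t0 : 0 < t by rewrite divr_gt0 ?ltr0n.
set A := \sum_(s | P s) `|v s| ^+ 2 in hv *.
set B := \sum_(s | ~~ P s) `|w s| ^+ 2 in hw *.
have nvP : \sum_(s | ~~ P s) `|v s| ^+ 2 = 1 - A.
  by rewrite -nv /qnorm2 [in RHS](bigID P) /= -/A addrC addrK.
have nwP : \sum_(s | P s) `|w s| ^+ 2 = 1 - B.
  by rewrite -nw /qnorm2 [in RHS](bigID P) /= -/B addrK.
have AGM s : 2 * (`|v s| * `|w s|) <= if P s then t * `|v s| ^+ 2 + t^-1 * `|w s| ^+ 2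
                                       else t^-1 * `|v s| ^+ 2 + t * `|w s| ^+ 2.
  case: (P s); first exact: ler_weighted_AGM2.
  by rewrite -{2}(invrK t) ler_weighted_AGM2 ?invr_gt0.
rewrite -(ler_pM2l (_ : 0 < 2)) //; apply: le_trans (ler_wpM2l _ (norm_qdot_le v w)) _ => //.
rewrite big_distrr; apply: le_trans (ler_sum _ (fun s _ => AGM s)) _.
rewrite (bigID P) /=; under eq_bigr => s -> do [].
under [X in _ + X]eq_bigr => s /negbTE -> do [].
rewrite !big_split /= -!big_distrr /= -/A -/B nvP nwP -subr_ge0.
have -> : 2 * (17%:R / 18%:R) - (t * A + t^-1 * (1 - B) + (t^-1 * (1 - A) + t * B))
   = 5%:R / 6%:R * ((A - 2%:R / 3%:R) + (B - 2%:R / 3%:R)) by rewrite /t; field.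
by rewrite mulr_ge0 ?divr_ge0 ?ler0n // addr_ge0 // subr_ge0.
Qed.

End InnerProduct.

Section Oracle.
Variables n m : nat.
Implicit Types (x y : 'I_n -> 'I_n -> bool) (s : qbasis n m) (v w : qvec (qbasis n m)).

Definition qat (T : Type) (f : 'I_n -> 'I_n -> T) s : T := f s.1.1.1 s.1.1.2.

Lemma qat_flip T (f : 'I_n -> 'I_n -> T) x s : qat f (oracle_flip x s) = qat f s.
Proof. by case: s => [[[i j] b] w]. Qed.

Lemma oracle_flipK x : involutive (oracle_flip x : qbasis n m -> _).
Proof. by case=> [[[i j] b] w] /=; rewrite addbK. Qed.

Lemma oracle_flipC x y s :
  oracle_flip x (oracle_flip y s) = oracle_flip y (oracle_flip x s).
Proof. by case: s => [[[i j] b] w] /=; rewrite addbAC. Qed.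

Lemma oracle_flip_eq x y s :
  qat x s = qat y s -> oracle_flip y (oracle_flip x s) = s.
Proof. by case: s => [[[i j] b] w]; rewrite /qat /= => ->; rewrite addbK. Qed.

Lemma qapply_qoracle x v s : qapply (qoracle x) v s = v (oracle_flip x s).
Proof.
rewrite /qapply /qoracle (bigD1 (oracle_flip x s)) //= oracle_flipK eqxx mul1r.
rewrite big1 ?addr0 // => t; case: (s =P oracle_flip x t) => [->|_].
  by rewrite oracle_flipK eqxx.
by rewrite mul0r.
Qed.

Lemma qdot_qoracle x v w :
  qdot (qapply (qoracle x) v) (qapply (qoracle x) w) = qdot v w.
Proof.
rewrite /qdot (reindex_inj (can_inj (oracle_flipK x))); apply: eq_bigr => s _.
by rewrite !qapply_qoracle oracle_flipK.
Qed.

(* Reindex by [oracle_flip x]: wherever [x] and [y] agree the two oracles cancel. *)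
Lemma qdot_qoracle_sub x y v w :
  qdot (qapply (qoracle x) v) (qapply (qoracle y) w) - qdot v w =
  \sum_s (qat x s != qat y s)%:R *
         ((v s)^* * (w (oracle_flip y (oracle_flip x s)) - w s)).
Proof.
rewrite /qdot (reindex_inj (can_inj (oracle_flipK x))) -sumrB; apply: eq_bigr => s _.
rewrite !qapply_qoracle oracle_flipK; case: eqP => [/oracle_flip_eq->|_].
  by rewrite subrr mul0r.
by rewrite mul1r mulrBr.
Qed.

Lemma norm_qdot_qoracle_sub x y v w (l : 'I_n -> 'I_n -> algC) :
  (forall i j, 0 < l i j) ->
  `|qdot (qapply (qoracle x) v) (qapply (qoracle y) w) - qdot v w| <=
  \sum_s (qat x s != qat y s)%:R *
         (qat l s * `|v s| ^+ 2 + (qat l s)^-1 * `|w s| ^+ 2).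
Proof.
move=> l_gt0; set g := fun s => oracle_flip y (oracle_flip x s).
set d := fun s => (qat x s != qat y s)%:R : algC.
have gK : involutive g by move=> s; rewrite /g oracle_flipC !oracle_flipK.
have qat_g T (f : 'I_n -> 'I_n -> T) s : qat f (g s) = qat f s by rewrite !qat_flip.
have d_ge0 s : 0 <= d s by rewrite ler0n.
have AGM (u : qvec (qbasis n m)) : 2 * \sum_s d s * (`|v s| * `|u s|) <=
    \sum_s d s * (qat l s * `|v s| ^+ 2 + (qat l s)^-1 * `|u s| ^+ 2).
  rewrite big_distrr /=; apply: ler_sum => s _.
  by rewrite mulrCA; apply: ler_wpM2l => //; apply: ler_weighted_AGM2 => //; apply: l_gt0.
have w_g : \sum_s d s * ((qat l s)^-1 * `|w (g s)| ^+ 2) =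
           \sum_s d s * ((qat l s)^-1 * `|w s| ^+ 2).
  by rewrite (reindex_inj (can_inj gK)); apply: eq_bigr => s _; rewrite /d !qat_g gK.
rewrite qdot_qoracle_sub -(ler_pM2l (_ : 0 < 2)) //.
apply: (@le_trans _ _ (2 * (\sum_s d s * (`|v s| * `|w (g s)|) +
                            \sum_s d s * (`|v s| * `|w s|)))).
  apply: ler_wpM2l => //; rewrite -big_split /=; apply: le_trans (ler_norm_sum _ _ _) _.
  apply: ler_sum => s _; rewrite normrM ger0_norm // -mulrDr; apply: ler_wpM2l => //.
  by rewrite normrM norm_conjC -mulrDr; apply: ler_wpM2l => //; apply: ler_normB.
rewrite mulrDr; apply: le_trans (lerD (AGM _) (AGM _)) _.
by rewrite !(eq_bigr _ (fun s _ => mulrDr _ _ _)) !big_split /= w_g mulr_natl mulr2n.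
Qed.

(* [r = sqrt n] balances [swap_changes_one] against [swap_changes_zero]. *)
Definition query_weight (r : algC) x : 'I_n -> 'I_n -> algC :=
  fun i j => if x i j then r^-1 else r.

Definition diff_mass r x y v : algC :=
  \sum_s (qat x s != qat y s)%:R * (qat (query_weight r x) s * `|v s| ^+ 2).

Lemma norm_qdot_qoracle_diff_mass r x y v w : 0 < r ->
  `|qdot (qapply (qoracle x) v) (qapply (qoracle y) w) - qdot v w| <=
  diff_mass r x y v + diff_mass r y x w.
Proof.
move=> r_gt0; apply: le_trans (norm_qdot_qoracle_sub _ _ _ _ (l := query_weight r x) _) _.
  by move=> i j; rewrite /query_weight; case: ifP; rewrite ?invr_gt0.
rewrite /diff_mass -big_split; apply: ler_sum => s _ /=.
rewrite mulrDr /qat /query_weight eq_sym.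
by case: (x _ _); case: (y _ _); rewrite ?mul0r ?invrK.
Qed.

Lemma qnorm2_qrun (U : nat -> qop (qbasis n m)) s0 x T k :
  (forall k, (k <= T)%N -> qunitary (U k)) -> (k <= T)%N ->
  qnorm2 (qrun U s0 x k) = 1.
Proof.
move=> unitaryU; elim: k => [|k IHk] lekT;
  rewrite -qdot_self /= qdot_unitary ?qdot_qoracle ?qdot_self; try exact: unitaryU.
- exact: qnorm2_basis.
- by rewrite IHk // ltnW.
Qed.

End Oracle.

Lemma sum_nat_pred1 (T : finType) (t0 : T) : (\sum_(t : T) (t == t0) = 1)%N.
Proof. by rewrite (bigD1 t0) //= eqxx big1 // => t /negbTE ->. Qed.

Section RowSwap.
Variable n : nat.
Implicit Types (p : 'S_n) (a b i j : 'I_n).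

Definition row_swap a b p : 'S_n := (tperm a b * p)%g.

Lemma row_swapK a b : involutive (row_swap a b).
Proof. by move=> p; rewrite /row_swap mulgA tperm2 mul1g. Qed.

Lemma odd_row_swap a b p : a != b -> odd_perm (row_swap a b p) = ~~ odd_perm p.
Proof. by rewrite /row_swap odd_mul_tperm => ->. Qed.

Lemma perm_matrix_row_swap a b p i j :
  perm_matrix (row_swap a b p) i j = perm_matrix p (tperm a b i) j.
Proof. by rewrite /perm_matrix permM. Qed.

Lemma sum_row_swap (f : 'S_n -> 'I_n -> 'I_n -> algC) :
  \sum_p \sum_a \sum_(b | b != a) f p a b =
  \sum_p \sum_a \sum_(b | b != a) f (row_swap a b p) a b.
Proof.
rewrite exchange_big [RHS]exchange_big; apply: eq_bigr => a _ /=.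
rewrite exchange_big [RHS]exchange_big; apply: eq_bigr => b _ /=.
exact: (reindex_inj (can_inj (row_swapK a b))).
Qed.

Definition swap_changes p i j : nat :=
  \sum_a \sum_b (perm_matrix p i j != perm_matrix (row_swap a b p) i j).

(* Only swaps involving row [i] change entry [(i, j)]. *)
Lemma swap_changes_one p i j : perm_matrix p i j -> (swap_changes p i j <= 2 * n)%N.
Proof.
move=> pij; apply: (@leq_trans (\sum_a \sum_b ((a == i) + (b == i)))%N).
  apply: leq_sum => a _; apply: leq_sum => b _.
  rewrite perm_matrix_row_swap; case: tpermP => [->|->|_ _].
  - by rewrite eqxx; case: (_ != _).
  - by rewrite eqxx addn1; case: (_ != _).
  - by rewrite eqxx.
under eq_bigr do rewrite big_split /= sum_nat_pred1 sum_nat_const card_ord.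
by rewrite big_split /= -big_distrr /= sum_nat_pred1 sum_nat_const card_ord !muln1 addnn mul2n.
Qed.

(* A 0-entry [(i, j)] becomes 1 only for the swap of [i] with [p^-1 j]. *)
Lemma swap_changes_zero p i j : ~~ perm_matrix p i j -> (swap_changes p i j <= 2)%N.
Proof.
move=> pij; set k := (p^-1)%g j.
have ik : (i == k) = false by apply/negbTE; rewrite -(canF_eq (permK p)).
apply: (@leq_trans (\sum_a \sum_b ((a == i) * (b == k) + (b == i) * (a == k)))%N).
  apply: leq_sum => a _; apply: leq_sum => b _.
  rewrite perm_matrix_row_swap (negPf pij) /perm_matrix (canF_eq (permK p)) -/k.
  by case: tpermP => [->|->|_ _]; rewrite negb_eqb /= ?eqxx ?mul1n ?leq_addr ?leq_addl ?ik.
under eq_bigr do rewrite big_split /= -big_distrr -big_distrl /= !sum_nat_pred1 muln1 mul1n.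
by rewrite big_split /= !sum_nat_pred1.
Qed.

Lemma swap_changes_weighted r p i j : 0 < r -> r ^+ 2 = n%:R ->
  (swap_changes p i j)%:R * query_weight r (perm_matrix p) i j <= 2 * r.
Proof.
move=> r_gt0 r2n; rewrite /query_weight; case: ifPn => pij.
  rewrite -(ler_pM2r r_gt0) mulfVK ?gt_eqF // -mulrA -expr2 r2n -natrM.
  by rewrite ler_nat swap_changes_one.
by rewrite ler_pM2r // ler_nat swap_changes_zero.
Qed.

Lemma sum_diff_mass_row_swap m r p (v : qvec (qbasis n m)) :
  0 < r -> r ^+ 2 = n%:R ->
  \sum_a \sum_(b | b != a) diff_mass r (perm_matrix p) (perm_matrix (row_swap a b p)) v <=
  2 * r * qnorm2 v.
Proof.
move=> r_gt0 r2n.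
have swap_aa a : diff_mass r (perm_matrix p) (perm_matrix (row_swap a a p)) v = 0.
  by rewrite /row_swap tperm1 mul1g /diff_mass big1 // => s _; rewrite eqxx mul0r.
have drop_aa a : \sum_(b | b != a) diff_mass r (perm_matrix p) (perm_matrix (row_swap a b p)) v
    = \sum_b diff_mass r (perm_matrix p) (perm_matrix (row_swap a b p)) v.
  by rewrite [RHS](bigD1 a) //= swap_aa add0r.
under eq_bigr => a _ do rewrite drop_aa.
rewrite /diff_mass /qnorm2 big_distrr /=.
under eq_bigr do rewrite exchange_big; rewrite exchange_big; apply: ler_sum => s _ /=.
under eq_bigr do rewrite -big_distrl /=; rewrite -big_distrl /= mulrA.
apply: ler_wpM2r; first exact: exprn_ge0.
move: (swap_changes_weighted p s.1.1.1 s.1.1.2 r_gt0 r2n).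
by rewrite /swap_changes natr_sum; under eq_bigr do rewrite natr_sum.
Qed.

End RowSwap.

Section Progress.
Variables (n m T : nat) (U : nat -> qop (qbasis n m)) (s0 : qbasis n m).
Hypothesis unitaryU : forall k, (k <= T)%N -> qunitary (U k).

Let psi p k := qrun U s0 (perm_matrix p) k.

Definition progress k : algC :=
  \sum_(p : 'S_n) \sum_a \sum_(b | b != a) `|qdot (psi p k) (psi (row_swap a b p) k)|.

Lemma progress0 : progress 0 = (n`! * (n * n.-1))%:R.
Proof.
have inner p a : \sum_(b | b != a) `|qdot (psi p 0) (psi (row_swap a b p) 0)| = n.-1%:R.
  rewrite (eq_bigr (fun=> 1)); first by rewrite sumr_const cardC1 card_ord.
  by move=> b _; rewrite qdot_self (qnorm2_qrun _ _ unitaryU) ?normr1.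
rewrite /progress (eq_bigr (fun=> (n * n.-1)%:R)).
  by rewrite sumr_const card_Sn -mulrnA mulnC.
by move=> p _; rewrite (eq_bigr _ (fun a _ => inner p a)) sumr_const card_ord -mulrnA mulnC.
Qed.

Lemma progress_step r k : 0 < r -> r ^+ 2 = n%:R -> (k < T)%N ->
  progress k <= progress k.+1 + 4%:R * r * (n`!)%:R.
Proof.
move=> r_gt0 r2n ltkT.
set D := fun p q => diff_mass r (perm_matrix p) (perm_matrix q) (psi p k).
have query p q : `|qdot (psi p k) (psi q k)| <=
                 `|qdot (psi p k.+1) (psi q k.+1)| + (D p q + D q p).
  rewrite /psi /= qdot_unitary; last exact: unitaryU.
  rewrite -lerBlDl; apply: le_trans (lerB_dist _ _) _.
  by rewrite distrC norm_qdot_qoracle_diff_mass.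
have sum_D : \sum_p \sum_a \sum_(b | b != a) D p (row_swap a b p) <= 2 * r * (n`!)%:R.
  apply: le_trans (ler_sum _ (fun p _ => sum_diff_mass_row_swap _ (psi p k) r_gt0 r2n)) _.
  rewrite (eq_bigr (fun=> 2 * r)) ?sumr_const ?card_Sn ?mulr_natr // => p _.
  by rewrite (qnorm2_qrun _ _ unitaryU) ?mulr1 // ltnW.
have sum_D_swap : \sum_p \sum_a \sum_(b | b != a) D (row_swap a b p) p =
                  \sum_p \sum_a \sum_(b | b != a) D p (row_swap a b p).
  by rewrite sum_row_swap; do 3 (apply: eq_bigr => ? _); rewrite row_swapK.
rewrite /progress; set Q := fun p a b => `|qdot (psi p k.+1) (psi (row_swap a b p) k.+1)|.
apply: (@le_trans _ _ (\sum_p \sum_a \sum_(b | b != a)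
                          (Q p a b + (D p (row_swap a b p) + D (row_swap a b p) p)))).
  by do 3 (apply: ler_sum => ? _); apply: query.
have -> : \sum_p \sum_a \sum_(b | b != a)
             (Q p a b + (D p (row_swap a b p) + D (row_swap a b p) p)) =
          \sum_p \sum_a \sum_(b | b != a) Q p a b +
          (\sum_p \sum_a \sum_(b | b != a) D p (row_swap a b p) +
           \sum_p \sum_a \sum_(b | b != a) D (row_swap a b p) p).
  rewrite -!big_split; apply: eq_bigr => p _.
  by rewrite -!big_split; apply: eq_bigr => a _; rewrite -!big_split.
rewrite sum_D_swap lerD2l; apply: le_trans (lerD sum_D sum_D) _.
by rewrite -!mulrDl -natrD.
Qed.

Lemma progress_final out : computes_perm_sign T U s0 out ->
  progress T <= 17%:R / 18%:R * progress 0.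
Proof.
move=> [_ correct]; rewrite /progress !mulr_sumr; apply: ler_sum => p _.
rewrite mulr_sumr; apply: ler_sum => a _; rewrite mulr_sumr; apply: ler_sum => b; rewrite eq_sym => ab.
rewrite qdot_self (qnorm2_qrun _ _ unitaryU) // normr1 mulr1.
apply: (norm_qdot_separated (P := fun s => out s == odd_perm p)).
- exact: (qnorm2_qrun _ _ unitaryU).
- exact: (qnorm2_qrun _ _ unitaryU).
- exact: correct.
- move: (correct (row_swap a b p)); rewrite odd_row_swap //.
  rewrite /qprob (eq_bigl (fun s => ~~ (out s == odd_perm p))) //.
  by move=> s; case: (out s); case: (odd_perm p).
Qed.

Lemma progress_lower r : 0 < r -> r ^+ 2 = n%:R ->
  progress 0 <= progress T + T%:R * (4%:R * r * (n`!)%:R).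
Proof.
move=> r_gt0 r2n; set X := 4%:R * r * (n`!)%:R.
suff: forall k, (k <= T)%N -> progress 0 <= progress k + k%:R * X by apply.
elim=> [|k IHk] ltkT; first by rewrite mul0r addr0.
apply: le_trans (IHk (ltnW ltkT)) _.
by rewrite -natr1 mulrDl mul1r (addrC (k%:R * X)) addrA lerD2r progress_step.
Qed.

End Progress.

Lemma perm_sign_queries_sqrt n m T (U : nat -> qop (qbasis n m)) s0 out :
  (0 < n)%N -> computes_perm_sign T U s0 out ->
  (n * n.-1)%:R <= 72%:R * T%:R * sqrtC n%:R :> algC.
Proof.
move=> n_gt0 correct; have unitaryU := correct.1.
set r := sqrtC n%:R; have r_gt0 : 0 < r by rewrite sqrtC_gt0 ltr0n.
have lower := progress_lower s0 unitaryU r_gt0 (sqrtCK _).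
have upper := progress_final unitaryU correct.
rewrite (progress0 s0 unitaryU) in lower upper.
have := le_trans lower (lerD upper (lexx _)); rewrite -lerBlDl.
have -> : (n`! * (n * n.-1))%:R - 17%:R / 18%:R * (n`! * (n * n.-1))%:R =
          (n`!)%:R * ((n * n.-1)%:R / 18%:R) :> algC by rewrite natrM; field.
have -> : T%:R * (4%:R * r * (n`!)%:R) = (n`!)%:R * (4%:R * T%:R * r) by ring.
have -> : 72%:R * T%:R * r = 4%:R * T%:R * r * 18%:R by ring.
by rewrite ler_pM2l ?ltr0n ?fact_gt0 // ler_pdivrMr ?ltr0n.
Qed.

Lemma perm_sign_queries_cube n m T (U : nat -> qop (qbasis n m)) s0 out :
  (2 <= n)%N -> computes_perm_sign T U s0 out -> (n ^ 3 <= 144 ^ 2 * T ^ 2)%N.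
Proof.
move=> le2n correct; have n_gt0 : (0 < n)%N by apply: ltnW.
have bound := perm_sign_queries_sqrt n_gt0 correct; set r := sqrtC n%:R in bound.
have sq : (n ^ 2)%:R <= 144%:R * T%:R * r :> algC.
  apply: (@le_trans _ _ (2 * (n * n.-1))%:R); first by rewrite ler_nat; nia.
  rewrite natrM (_ : 144%:R = 2%:R * 72%:R :> algC); last by rewrite -natrM.
  by rewrite -!mulrA ler_pM2l // mulrA.
have r_ge0 : 0 <= 144%:R * T%:R * r by rewrite !mulr_ge0 ?ler0n ?sqrtC_ge0.
have := lerXn2r 2 (ler0n _ _) r_ge0 sq.
rewrite !exprMn sqrtCK -!natrX -!natrM ler_nat -expnM => n4_le.
by rewrite -(leq_pmul2r n_gt0) -expnSr.
Qed.

Lemma ler_sqr_invn_natr (F : numFieldType) (k a b : nat) : (0 < k)%N ->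
  (a <= k ^ 2 * b)%N -> k%:R^-1 ^+ 2 * a%:R <= b%:R :> F.
Proof.
by move=> k_gt0 h; rewrite exprVn ler_pdivrMl ?exprn_gt0 ?ltr0n // -natrX -natrM ler_nat.
Qed.

Theorem mainTheorem10 :
  exists (c : rat) (N : nat), 0 < c /\
    forall (n m T : nat) (U : nat -> qop (qbasis n m)) (s0 : qbasis n m)
           (out : qbasis n m -> bool),
      (N <= n)%N -> computes_perm_sign T U s0 out ->
      c ^+ 2 * (n ^ 3)%:R <= (T ^ 2)%:R.
Proof.
exists 144%:R^-1, 2%N; split; first by rewrite invr_gt0 ltr0n.
move=> n m T U s0 out le2n correct.
exact/ler_sqr_invn_natr/(perm_sign_queries_cube le2n correct).
Qed.
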